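(* Let $n_1,\dots,n_k>1$ be integers and let $(\mathbb{Z},\Lambda)$ be the product of odometers described in the context, and put $n=(n_1,\dots,n_k)$, $n^p=\prod_{i=1}^kn_i^{p_i}$ for $p\in\mathbb{Z}^k$. Then $$\mathrm{Per}_{\mathbb{Z},\Lambda}=\mathrm{Per}_\Lambda=\{p\in\mathbb{Z}^k:n^p=1\}.$$
   Context: Let $k\ge1$. A $k$-graph is a countable small category $\Lambda$ together with a functor $d:\Lambda\to\mathbb{N}^k$ (the degree map) with the unique factorization property: for every $\mu\in\Lambda$ and $m,n\in\mathbb{N}^k$ with $d(\mu)=m+n$ there are unique $\alpha,\beta\in\Lambda$ with $d(\alpha)=m$, $d(\beta)=n$ and $\mu=\alpha\beta$. Write $\Lambda^n=d^{-1}(n)$, $\Lambda^0$ the vertices, $r,s$ range and source; $e_1,\dots,e_k$ is the standard basis of $\mathbb{N}^k$. Infinite paths: let $\Omega_k=\{(p,q)\in\mathbb{N}^k\times\mathbb{N}^k:p\le q\}$ with $r(p,q)=(p,p)$, $s(p,q)=(q,q)$, $(p,q)(q,m)=(p,m)$, $d(p,q)=q-p$. An infinite path is a degree-preserving functor $x:\Omega_k\to\Lambda$; $\Lambda^\infty$ is the set of infinite paths, $v\Lambda^\infty=\{x:x(0,0)=v\}$, and for $\mu\in\Lambda$, $x\in s(\mu)\Lambda^\infty$, $\mu x$ is the unique infinite path $y$ with $y(0,d(\mu))=\mu$ and $y(d(\mu)+p,d(\mu)+q)=x(p,q)$ for all $p\le q$. Self-similar actions: for a group $G$, a self-similar action $(G,\Lambda)$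 consists of an action of $G$ on $\Lambda$ by automorphisms (bijections preserving $d$, $r$, $s$), written $g\cdot\mu$, and a restriction map $(g,\mu)\mapsto g|_\mu\in G$ such that for all $g,h\in G$, $v\in\Lambda^0$ and $\mu,\nu$ with $s(\mu)=r(\nu)$: $g\cdot(\mu\nu)=(g\cdot\mu)(g|_\mu\cdot\nu)$; $g|_v=g$; $g|_{\mu\nu}=(g|_\mu)|_\nu$; $1_G|_\mu=1_G$; $(gh)|_\mu=g|_{h\cdot\mu}\,h|_\mu$. For $x\in\Lambda^\infty$, $(g\cdot x)(p,q)=g|_{x(0,p)}\cdot x(p,q)$. Products of odometers: $\Lambda$ is a $k$-graph with a single vertex such that $\Lambda^{e_i}=\{x^i_{\mathfrak s}:0\le\mathfrak{s}\le n_i-1\}$ for $1\le i\le k$, with factorization rules $x^i_{\mathfrak s}x^j_{\mathfrak t}=x^j_{\mathfrak t'}x^i_{\mathfrak s'}$ for $1\le i<j\le k$ whenever $\mathfrak{s},\mathfrak{s}'\in\{0,\dots,n_i-1\}$, $\mathfrak{t},\mathfrak{t}'\in\{0,\dots,n_j-1\}$ and $\mathfrak{s}+\mathfrak{t}n_i=\mathfrak{t}'+\mathfrak{s}'n_j$. The group $\mathbb{Z}$ acts self-similarly on $\Lambda$, determined by $1\cdot x^i_{\mathfrak s}=x^i_{(\mathfrak{s}+1)\bmod n_i}$ and $1|_{x^i_{\mathfrak s}}=0$ if $\mathfrak{s}<n_i-1$, $1|_{x^i_{n_i-1}}=1$. This action is pseudo free, locally faithful, satisfies the finite-state condition, and $\Lambda$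 is strongly connected and finite. Cycline triples and periodicity: a triple $(\mu,g,\nu)\in\Lambda\times G\times\Lambda$ with $s(\mu)=g\cdot s(\nu)$ is cycline if $\mu(g\cdot x)=\nu x$ for all $x\in s(\nu)\Lambda^\infty$. $\mathrm{Per}_{G,\Lambda}=\{d(\mu)-d(\nu):(\mu,g,\nu)\text{ cycline}\}\subseteq\mathbb{Z}^k$, and $\mathrm{Per}_\Lambda=\{d(\mu)-d(\nu):(\mu,1_G,\nu)\text{ cycline}\}$ (i.e. from pairs $(\mu,\nu)$ with $\mu x=\nu x$ for all $x\in s(\nu)\Lambda^\infty$). *)

From HB Require Import structures.
From mathcomp Require Import all_boot all_order all_algebra.
Set Implicit Arguments. Unset Strict Implicit. Unset Printing Implicit Defensive.
Import Order.TTheory GRing.Theory Num.Theory.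

Definition dvec (k : nat) := {ffun 'I_k -> nat}.
Definition zvec (k : nat) := {ffun 'I_k -> int}.
Definition dzero {k} : dvec k := [ffun => 0%N].
Definition dadd {k} (m n : dvec k) : dvec k := [ffun i => (m i + n i)%N].
Definition dsub {k} (q p : dvec k) : dvec k := [ffun i => (q i - p i)%N].
Definition dle {k} (p q : dvec k) : bool := [forall i, p i <= q i].
Definition dunit {k} (i : 'I_k) : dvec k := [ffun j => nat_of_bool (j == i)].
Definition ddiff {k} (m n : dvec k) : zvec k := [ffun i => (m i)%:Z - (n i)%:Z]%R.

(* A countable small category (vertices = objects, identified with identity
   morphisms kid v; composition kcomp is total but only meaningful on
   composable pairs) with a degree functor satisfying unique factorization. *)
Record kgraph (k : nat) := KGraph {
  kV : Type;
  kP : Type;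
  kr : kP -> kV;
  ks : kP -> kV;
  kid : kV -> kP;
  kcomp : kP -> kP -> kP;
  kd : kP -> dvec k;
  kg_countable : exists f : kP -> nat, injective f;
  kg_r_id : forall v, kr (kid v) = v;
  kg_s_id : forall v, ks (kid v) = v;
  kg_r_comp : forall a b, ks a = kr b -> kr (kcomp a b) = kr a;
  kg_s_comp : forall a b, ks a = kr b -> ks (kcomp a b) = ks b;
  kg_id_l : forall a, kcomp (kid (kr a)) a = a;
  kg_id_r : forall a, kcomp a (kid (ks a)) = a;
  kg_assoc : forall a b c, ks a = kr b -> ks b = kr c ->
      kcomp a (kcomp b c) = kcomp (kcomp a b) c;
  kg_d_id : forall v, kd (kid v) = dzero;
  kg_d_comp : forall a b, ks a = kr b -> kd (kcomp a b) = dadd (kd a) (kd b);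
  kg_fact_ex : forall mu (m n : dvec k), kd mu = dadd m n ->
      exists a b, [/\ ks a = kr b, kd a = m, kd b = n & mu = kcomp a b];
  kg_fact_uniq : forall a b a' b', ks a = kr b -> ks a' = kr b' ->
      kd a = kd a' -> kd b = kd b' -> kcomp a b = kcomp a' b' -> a = a' /\ b = b'
}.

Arguments kr {k L} _ : rename.
Arguments ks {k L} _ : rename.
Arguments kid {k L} _ : rename.
Arguments kcomp {k L} _ _ : rename.
Arguments kd {k L} _ : rename.

(* x (p,q) is given by x p q; only values with p <= q matter. *)
Definition infpath {k} (L : kgraph k) (x : dvec k -> dvec k -> kP L) : Prop :=
  exists F : dvec k -> kV L,
    [/\ forall p, x p p = kid (F p),
        forall p q, dle p q -> [/\ kd (x p q) = dsub q p, kr (x p q) = F p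
                                 & ks (x p q) = F q]
      & forall p q m, dle p q -> dle q m -> kcomp (x p q) (x q m) = x p m].

Definition is_concat {k} (L : kgraph k) (mu : kP L)
    (x y : dvec k -> dvec k -> kP L) : Prop :=
  [/\ infpath y, y dzero (kd mu) = mu
    & forall p q, dle p q -> y (dadd (kd mu) p) (dadd (kd mu) q) = x p q].

Record selfsim (G : zmodType) k (L : kgraph k) := SelfSim {
  act : G -> kP L -> kP L;
  actV : G -> kV L -> kV L;
  res : G -> kP L -> G;
  ss_bij : forall g, bijective (act g);
  ss_act0 : forall a, act 0%R a = a;
  ss_actD : forall g h a, act (g + h)%R a = act g (act h a);
  ss_actV0 : forall v, actV 0%R v = v;
  ss_actVD : forall g h v, actV (g + h)%R v = actV g (actV h v);
  ss_act_id : forall g v, act g (kid v) = kid (actV g v);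
  ss_d : forall g a, kd (act g a) = kd a;
  ss_r : forall g a, kr (act g a) = actV g (kr a);
  ss_s : forall g a, ks (act g a) = actV g (ks a);
  ss_comp : forall g a b, ks a = kr b ->
      act g (kcomp a b) = kcomp (act g a) (act (res g a) b);
  ss_res_id : forall g v, res g (kid v) = g;
  ss_res_comp : forall g a b, ks a = kr b -> res g (kcomp a b) = res (res g a) b;
  ss_res0 : forall a, res 0%R a = 0%R;
  ss_resD : forall g h a, res (g + h)%R a = (res g (act h a) + res h a)%R
}.

Definition gact {G : zmodType} {k} {L : kgraph k} (A : selfsim G L) (g : G)
    (x : dvec k -> dvec k -> kP L) : dvec k -> dvec k -> kP L :=
  fun p q => act A (res A g (x dzero p)) (x p q).

Definition cycline {G : zmodType} {k} {L : kgraph k} (A : selfsim G L)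
    (mu : kP L) (g : G) (nu : kP L) : Prop :=
  ks mu = actV A g (ks nu) /\
  forall x, infpath x -> x dzero dzero = kid (ks nu) ->
    exists y, is_concat mu (gact A g x) y /\ is_concat nu x y.

Definition Per_GL {G : zmodType} {k} {L : kgraph k} (A : selfsim G L)
    (p : zvec k) : Prop :=
  exists mu g nu, cycline A mu g nu /\ p = ddiff (kd mu) (kd nu).

Definition Per_L {k} (L : kgraph k) (p : zvec k) : Prop :=
  exists mu nu : kP L,
    [/\ ks mu = ks nu,
        forall x, infpath x -> x dzero dzero = kid (ks nu) ->
          exists y, is_concat mu x y /\ is_concat nu x y
      & p = ddiff (kd mu) (kd nu)].

Definition odometer_kgraph {k} (n : 'I_k -> nat) (L : kgraph k)
    (x : 'I_k -> nat -> kP L) : Prop :=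
  [/\ exists v : kV L, forall w, w = v,
      forall i s, s < n i -> kd (x i s) = dunit i,
      forall i mu, kd mu = dunit i -> exists2 s, s < n i & mu = x i s,
      forall i s t, s < n i -> t < n i -> x i s = x i t -> s = t
    & forall i j : 'I_k, i < j -> forall s t s' t',
        s < n i -> s' < n i -> t < n j -> t' < n j ->
        s + t * n i = t' + s' * n j ->
        kcomp (x i s) (x j t) = kcomp (x j t') (x i s')].

Definition odometer_action {k} (n : 'I_k -> nat) (L : kgraph k)
    (x : 'I_k -> nat -> kP L) (A : selfsim int L) : Prop :=
  forall i s, s < n i ->
    act A 1%R (x i s) = x i ((s + 1) %% n i) /\
    res A 1%R (x i s) = (if s < (n i).-1 then 0%R else 1%R).

Definition npow {k} (n : 'I_k -> nat) (p : zvec k) : rat :=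
  (\prod_(i < k) ((n i)%:R ^ (p i)))%R.

From HB Require Import structures.
From mathcomp Require Import all_boot all_order all_algebra.
From mathcomp Require Import zify.
From Stdlib Require Import ClassicalEpsilon FunctionalExtensionality.
Set Implicit Arguments. Unset Strict Implicit. Unset Printing Implicit Defensive.
Import GRing.Theory Num.Theory.

(** In the single-vertex odometer graph a path [a] is determined by its degree [m]
    and a mixed-radix value [v(a) < n^m], read off any factorization of [a] into
    edges; the factorization rules [x^i_s x^j_t = x^j_t' x^i_s'] say precisely that
    this value does not depend on the factorization, and [v(ab) = v(a) + n^(d a) v(b)].
    Infinite paths are then n-adic integers, and prepending [mu] is the affine map
    [z |-> v(mu) + n^(d mu) z].  If [n^a = n^b], the paths of value 0 and degrees [a]
    and [b] thus act identically.  Conversely a cycline triple [(mu, g, nu)] yields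
    [v(mu) + n^(d mu) v(g.x(0, d nu)) = v(nu) + n^(d nu) v(x(0, d mu))] for every
    infinite path [x]; taking for [x] the n-adic integers 0 and 1, resp. the preimages
    of 0 and 1 under [g], gives [n^(d mu) | n^(d nu)] and [n^(d nu) | n^(d mu)]. *)

Lemma modn_mul_split B N1 N2 :
  B %% N1 + N1 * (B %/ N1 %% N2) = B %% (N1 * N2).
Proof.
rewrite modn_divl (mulnC N2) -(modn_dvdm B (dvdn_mulr N2 (dvdnn N1))).
by rewrite addnC mulnC -divn_eq.
Qed.

Lemma dvdn_digit_shift N M c c' (X : nat -> nat) : 0 < N ->
  (forall w, c + N * X w = c' + M * (w %% N)) -> N %| M.
Proof.
move=> N_gt0 eqX; have [N_le1|N_gt1] := leqP N 1.
  by have -> : N = 1 by lia.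
have := eqX 0; have := eqX 1; rewrite mod0n (modn_small N_gt1) muln0 muln1 addn0.
move=> eq1 eq0; have shift : N * X 1 = N * X 0 + M by lia.
by rewrite -(dvdn_addr M (dvdn_mulr (X 0) (dvdnn N))) -shift dvdn_mulr.
Qed.

Section DegreeVectors.
Variable k : nat.
Implicit Types m p q : dvec k.

Lemma dleP p q : reflect (forall i, p i <= q i) (dle p q).
Proof. exact: forallP. Qed.

Lemma dle_refl p : dle p p.
Proof. by apply/dleP. Qed.

Lemma dle0 p : dle dzero p.
Proof. by apply/dleP=> i; rewrite ffunE. Qed.

Lemma dle_daddr m p : dle m (dadd m p).
Proof. by apply/dleP=> i; rewrite ffunE leq_addr. Qed.

Lemma dle_dsub2r m p q : dle p q -> dle (dsub p m) (dsub q m).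
Proof. by move/dleP=> le_pq; apply/dleP=> i; rewrite !ffunE leq_sub2r. Qed.

Lemma dle_dsubl m p : dle (dsub p m) p.
Proof. by apply/dleP=> i; rewrite ffunE leq_subr. Qed.

Lemma dle_dadd_dsub m q : dle q (dadd m (dsub q m)).
Proof. by apply/dleP=> i; rewrite !ffunE; lia. Qed.

Lemma daddC m p : dadd m p = dadd p m.
Proof. by apply/ffunP=> i; rewrite !ffunE addnC. Qed.

Lemma dadd0 m : dadd m dzero = m.
Proof. by apply/ffunP=> i; rewrite !ffunE addn0. Qed.

Lemma daddI m : injective (dadd m).
Proof.
by move=> p q /ffunP eq_mpq; apply/ffunP=> i; have := eq_mpq i; rewrite !ffunE => /addnI.
Qed.

Lemma dsubKC p q : dle p q -> dadd p (dsub q p) = q.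
Proof. by move/dleP=> le_pq; apply/ffunP=> i; rewrite !ffunE subnKC. Qed.

Lemma dsub0 m : dsub m dzero = m.
Proof. by apply/ffunP=> i; rewrite !ffunE subn0. Qed.

Lemma dsubdd m : dsub m m = dzero.
Proof. by apply/ffunP=> i; rewrite !ffunE subnn. Qed.

Lemma daddKr m p : dsub (dadd m p) m = p.
Proof. by apply/ffunP=> i; rewrite !ffunE addKn. Qed.

Lemma dsubDl m p q : dsub (dadd m q) (dadd m p) = dsub q p.
Proof. by apply/ffunP=> i; rewrite !ffunE subnDl. Qed.

Lemma dadd_dsub2 p q m : dle p q -> dle q m -> dadd (dsub q p) (dsub m q) = dsub m p.
Proof.
move=> /dleP le_pq /dleP le_qm; apply/ffunP=> i; rewrite !ffunE.
by have := le_pq i; have := le_qm i; lia.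
Qed.

Definition dsize m := \sum_(i < k) m i.

Lemma dsizeD m p : dsize (dadd m p) = dsize m + dsize p.
Proof. by rewrite /dsize -big_split; apply: eq_bigr=> i _; rewrite ffunE. Qed.

Lemma dsize_dunit i : dsize (dunit i) = 1.
Proof.
rewrite /dsize (bigD1 i) //= big1 ?ffunE ?eqxx // => j /negbTE ji.
by rewrite ffunE ji.
Qed.

Lemma dsize_eq0 m : dsize m = 0 -> m = dzero.
Proof.
move=> m0; apply/ffunP=> i; rewrite ffunE.
have: m i <= dsize m by rewrite /dsize (bigD1 i) //= leq_addr.
by rewrite m0 leqn0 => /eqP.
Qed.

Lemma dvec_neq0 m : m <> dzero -> exists i, 0 < m i.
Proof.
move=> m_nz; have [/existsP //|/existsPn m_le0] := boolP [exists i, 0 < m i].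
by case: m_nz; apply/ffunP=> i; rewrite ffunE; move: (m_le0 i); case: (m i).
Qed.

Lemma dadd_dunit_dsub m i : 0 < m i -> dadd (dunit i) (dsub m (dunit i)) = m.
Proof. by move=> m_i; apply/ffunP=> j; rewrite !ffunE; case: eqP => [->|] /=; lia. Qed.

End DegreeVectors.

Section InfinitePaths.
Variables (k : nat) (L : kgraph k).
Implicit Types (x y : dvec k -> dvec k -> kP L) (p q m : dvec k).

Lemma infpath_kd x p q : infpath x -> dle p q -> kd (x p q) = dsub q p.
Proof. by case=> F [_ x_path _] /x_path []. Qed.

Lemma infpath_kcomp x p q m : infpath x -> dle p q -> dle q m ->
  kcomp (x p q) (x q m) = x p m.
Proof. by case=> F [_ _ x_comp]; apply: x_comp. Qed.

Lemma is_concat_init (mu : kP L) x y : is_concat mu x y ->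
  forall p, y dzero (dadd (kd mu) p) = kcomp mu (x dzero p).
Proof.
case=> y_path y_mu y_shift p.
rewrite -(infpath_kcomp y_path (dle0 (kd mu)) (dle_daddr (kd mu) p)) y_mu.
by have := y_shift dzero p (dle0 p); rewrite dadd0 => ->.
Qed.

Lemma gact0 (G : zmodType) (A : selfsim G L) x : gact A 0%R x = x.
Proof.
by apply: functional_extensionality => p; apply: functional_extensionality => q;
  rewrite /gact ss_res0 ss_act0.
Qed.

Lemma Per_L_Per_GL (G : zmodType) (A : selfsim G L) (p : zvec k) : Per_L L p -> Per_GL A p.
Proof.
case=> mu [nu [s_eq concat_eq ->]]; exists mu, 0%R, nu; split=> //.
by split=> [|x]; [rewrite ss_actV0 | rewrite gact0; apply: concat_eq].
Qed.

End InfinitePaths.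

Section SingleVertex.
Variables (k : nat) (L : kgraph k).
Hypothesis one_vertex : forall v w : kV L, v = w.
Implicit Types a b c : kP L.

Lemma composable a b : ks a = kr b.
Proof. exact: one_vertex. Qed.

Lemma kd_kcomp a b : kd (kcomp a b) = dadd (kd a) (kd b).
Proof. exact: kg_d_comp (composable a b). Qed.

Lemma kcompA a b c : kcomp a (kcomp b c) = kcomp (kcomp a b) c.
Proof. exact: kg_assoc (composable _ _) (composable _ _). Qed.

Lemma kcomp_kidl v b : kcomp (kid v) b = b.
Proof. by rewrite (one_vertex v (kr b)) kg_id_l. Qed.

Lemma kd_eq0_kid a v : kd a = dzero -> a = kid v.
Proof.
move=> a0; rewrite (one_vertex v (kr a)).
have [] := kg_fact_uniq (a := kid (kr a)) (b := a) (a' := a) (b' := kid (ks a)).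
- by rewrite kg_s_id.
- by rewrite kg_r_id.
- by rewrite kg_d_id a0.
- by rewrite kg_d_id a0.
- by rewrite kg_id_l kg_id_r.
- by move=> ->.
Qed.

Lemma kcomp_inj a b a' b' : kd a = kd a' -> kcomp a b = kcomp a' b' -> a = a' /\ b = b'.
Proof.
move=> da eq_ab; apply: kg_fact_uniq => //; try exact: composable.
by apply: (@daddI _ (kd a)); rewrite -kd_kcomp eq_ab kd_kcomp da.
Qed.

Lemma infpath_origin (x : dvec k -> dvec k -> kP L) v :
  infpath x -> x dzero dzero = kid v.
Proof.
by move=> x_path; apply: kd_eq0_kid; rewrite (infpath_kd x_path (dle_refl _)) dsubdd.
Qed.

End SingleVertex.

Section Odometer.
Variables (k : nat) (n : 'I_k -> nat) (L : kgraph k) (e : 'I_k -> nat -> kP L).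
Hypothesis n_gt1 : forall i, 1 < n i.
Hypothesis odo : odometer_kgraph n e.
Implicit Types (a b : kP L) (m p q : dvec k).

Lemma n_gt0 i : 0 < n i.
Proof. exact: ltnW (n_gt1 i). Qed.

Lemma odometer_one_vertex (v w : kV L) : v = w.
Proof. by case: odo => [[v0 all_v0]] _ _ _ _; rewrite (all_v0 v) (all_v0 w). Qed.

Local Notation kd_kcomp := (kd_kcomp odometer_one_vertex).
Local Notation kcompA := (kcompA odometer_one_vertex).
Local Notation kcomp_inj := (kcomp_inj odometer_one_vertex).
Local Notation kcomp_kidl := (kcomp_kidl odometer_one_vertex).
Local Notation kd_eq0_kid := (kd_eq0_kid odometer_one_vertex).

Lemma kd_edge i s : s < n i -> kd (e i s) = dunit i.
Proof. by case: odo => _ kd_e _ _ _; apply: kd_e. Qed.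

Lemma edge_inj i s t : s < n i -> t < n i -> e i s = e i t -> s = t.
Proof. by case: odo => _ _ _ e_inj _; apply: e_inj. Qed.

Lemma kd_edge_kcomp i s a : s < n i -> kd (kcomp (e i s) a) = dadd (dunit i) (kd a).
Proof. by move=> s_lt; rewrite kd_kcomp kd_edge. Qed.

Lemma edge_factor a i : 0 < kd a i ->
  exists s a', [/\ s < n i, a = kcomp (e i s) a' & kd a' = dsub (kd a) (dunit i)].
Proof.
move=> /dadd_dunit_dsub /esym /kg_fact_ex [b [c [_ b_unit dc a_eq]]].
have [_ _ edgeP _ _] := odo; have [s s_lt b_eq] := edgeP _ _ b_unit.
by exists s, c; split=> //; rewrite a_eq b_eq.
Qed.

Lemma edge_swap i j s t : i != j -> s < n i -> t < n j ->
  exists t' s', [/\ t' < n j, s' < n i, s + n i * t = t' + n j * s'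
                  & kcomp (e i s) (e j t) = kcomp (e j t') (e i s')].
Proof.
move=> ij s_lt t_lt; set N := s + n i * t.
have N_lt : N < n i * n j.
  have : n i * t.+1 <= n i * n j by rewrite leq_mul2l t_lt orbT.
  by rewrite mulnS /N; lia.
have t'_lt : N %% n j < n j by rewrite ltn_mod n_gt0.
have s'_lt : N %/ n j < n i by rewrite ltn_divLR ?n_gt0.
have N_eq : s + t * n i = N %% n j + N %/ n j * n j.
  by rewrite [in RHS]addnC -divn_eq /N mulnC.
exists (N %% n j), (N %/ n j); split=> //; first by rewrite mulnC addnC -divn_eq.
have [_ _ _ _ rule] := odo.
case: (ltngtP i j) => [i_lt_j|j_lt_i|/val_inj/eqP]; last by rewrite (negbTE ij).
- exact: rule.
- by symmetry; apply: rule => //; rewrite -N_eq addnC.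
Qed.

Lemma edge_swap_factor i j s a : i != j -> s < n i -> 0 < kd a j ->
  exists t a' t' s', [/\ t < n j, a = kcomp (e j t) a', s + n i * t = t' + n j * s'
    & [/\ t' < n j, s' < n i & kcomp (e i s) a = kcomp (e j t') (kcomp (e i s') a')]].
Proof.
move=> ij s_lt /edge_factor [t [a' [t_lt -> _]]].
have [t' [s' [t'_lt s'_lt swap_eq swap]]] := edge_swap ij s_lt t_lt.
by exists t, a', t', s'; split=> //; split=> //; rewrite kcompA swap -kcompA.
Qed.

Definition nexp m := \prod_(i < k) n i ^ m i.

Lemma nexpD m p : nexp (dadd m p) = nexp m * nexp p.
Proof. by rewrite /nexp -big_split; apply: eq_bigr=> i _; rewrite ffunE expnD. Qed.

Lemma nexp0 : nexp dzero = 1.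
Proof. by rewrite /nexp big1 // => i _; rewrite ffunE. Qed.

Lemma nexp_dunit i : nexp (dunit i) = n i.
Proof.
rewrite /nexp (bigD1 i) //= big1 ?ffunE ?eqxx ?muln1 ?expn1 // => j /negbTE ji.
by rewrite ffunE ji.
Qed.

Lemma nexp_gt0 m : 0 < nexp m.
Proof. by apply: prodn_gt0 => i; rewrite expn_gt0 n_gt0. Qed.

Lemma nexp_dsub p q : dle p q -> nexp q = nexp p * nexp (dsub q p).
Proof. by move=> le_pq; rewrite -nexpD dsubKC. Qed.

Lemma dvdn_nexp p q : dle p q -> nexp p %| nexp q.
Proof. by move/nexp_dsub->; apply: dvdn_mulr. Qed.

(* [path_value a v]: [v] is the mixed-radix number whose digits are the labels of
   some factorization of [a] into edges, the first edge giving the least digit. *)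
Inductive path_value : kP L -> nat -> Prop :=
| path_value0 a : kd a = dzero -> path_value a 0
| path_value_edge i s a v : s < n i -> path_value a v ->
    path_value (kcomp (e i s) a) (s + n i * v).

Lemma path_valueP a v : path_value a v ->
  kd a = dzero /\ v = 0 \/
  exists i s a' v', [/\ s < n i, a = kcomp (e i s) a', v = s + n i * v' & path_value a' v'].
Proof. by case=> [? ?|i s a' v' ? ?]; [left | right; exists i, s, a', v']. Qed.

Lemma kd_edge_kcomp_neq0 i s a : s < n i -> kd (kcomp (e i s) a) <> dzero.
Proof. by move=> s_lt /ffunP /(_ i); rewrite kd_edge_kcomp // !ffunE eqxx. Qed.

Lemma dsize_edge_kcomp i s a : s < n i -> dsize (kd (kcomp (e i s) a)) = (dsize (kd a)).+1.
Proof. by move=> s_lt; rewrite kd_edge_kcomp // dsizeD dsize_dunit. Qed.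

Lemma path_value_exists a : exists v, path_value a v.
Proof.
move: {2}(dsize (kd a)) (leqnn (dsize (kd a))) => t.
elim: t a => [|t IH] a le_a.
  by exists 0; apply/path_value0/dsize_eq0; move: le_a; rewrite leqn0 => /eqP.
have [a0|/eqP/dvec_neq0 [i /edge_factor [s [a' [s_lt a_eq _]]]]] := eqVneq (kd a) dzero.
  by exists 0; apply: path_value0.
have [|v a'_v] := IH a'; first by move: le_a; rewrite a_eq dsize_edge_kcomp.
by exists (s + n i * v); rewrite a_eq; apply: path_value_edge.
Qed.

Lemma path_value_lt a v : path_value a v -> v < nexp (kd a).
Proof.
elim=> {a v} [a ->|i s a v s_lt _ v_lt]; first by rewrite nexp0.
rewrite kd_edge_kcomp // nexpD nexp_dunit.
have : n i * v.+1 <= n i * nexp (kd a) by rewrite leq_mul2l v_lt orbT.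
by rewrite mulnS; lia.
Qed.

Lemma path_value_deg0 a v : kd a = dzero -> path_value a v -> v = 0.
Proof.
move=> a0 /path_valueP [[_ //]|[i [s [? [? [s_lt a_eq _ _]]]]]].
by move: a0; rewrite a_eq => /kd_edge_kcomp_neq0.
Qed.

(* Induction on the size of the degree: two factorizations starting with edges of
   different colours are reconciled through the factorization rules. *)
Lemma path_value_uniq a v w : path_value a v -> path_value a w -> v = w.
Proof.
move: {2}(dsize (kd a)) (leqnn (dsize (kd a))) => t.
elim: t a v w => [|t IH] a v w le_a.
  move: le_a; rewrite leqn0 => /eqP /dsize_eq0 a0.
  by move=> /(path_value_deg0 a0) -> /(path_value_deg0 a0).
move=> /path_valueP [[a0 ->]|[i [s [a1 [v1 [s_lt a_eq -> a1_v1]]]]]].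
  by move=> /(path_value_deg0 a0).
move=> /path_valueP [[]|[j [t0 [a2 [v2 [t0_lt a_eq' -> a2_v2]]]]]].
  by rewrite a_eq => /kd_edge_kcomp_neq0.
have le_a1 : dsize (kd a1) <= t by move: le_a; rewrite a_eq dsize_edge_kcomp.
have le_a2 : dsize (kd a2) <= t by move: le_a; rewrite a_eq' dsize_edge_kcomp.
have [ij|ij] := eqVneq i j.
  subst j; have [/(edge_inj s_lt t0_lt) -> a12] : e i s = e i t0 /\ a1 = a2.
    by apply: kcomp_inj; rewrite ?kd_edge // -a_eq.
  by rewrite a12 in a1_v1; rewrite (IH _ _ _ le_a2 a1_v1 a2_v2).
have a1_j : 0 < kd a1 j.
  have /ffunP/(_ j) := congr1 kd (etrans (esym a_eq) a_eq').
  by rewrite !kd_edge_kcomp // !ffunE eqxx eq_sym (negbTE ij) /=; lia.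
have [t1 [mu [t' [s' [t1_lt a1_eq digits_eq [t'_lt s'_lt swap]]]]]] :=
  edge_swap_factor ij s_lt a1_j.
have [/(edge_inj t'_lt t0_lt) t'_eq a2_eq] : e j t' = e j t0 /\ kcomp (e i s') mu = a2.
  by apply: kcomp_inj; rewrite ?kd_edge // -swap -a_eq a_eq'.
have [z mu_z] := path_value_exists mu.
have -> : v1 = t1 + n j * z.
  by apply: (IH _ _ _ le_a1 a1_v1); rewrite a1_eq; apply: path_value_edge.
have -> : v2 = s' + n i * z.
  by apply: (IH _ _ _ le_a2 a2_v2); rewrite -a2_eq; apply: path_value_edge.
by rewrite -t'_eq !mulnDr addnA digits_eq -addnA !mulnA (mulnC (n i)).
Qed.

Definition pval a : nat :=
  proj1_sig (constructive_indefinite_description _ (path_value_exists a)).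

Lemma pvalP a : path_value a (pval a).
Proof. by rewrite /pval; case: constructive_indefinite_description. Qed.

Lemma pval_eq a v : path_value a v -> pval a = v.
Proof. exact: path_value_uniq (pvalP a). Qed.

Lemma pval_lt a : pval a < nexp (kd a).
Proof. exact: path_value_lt (pvalP a). Qed.

Lemma pval_edge i s a : s < n i -> pval (kcomp (e i s) a) = s + n i * pval a.
Proof. by move=> s_lt; apply/pval_eq/path_value_edge/pvalP. Qed.

Lemma pvalM a b : pval (kcomp a b) = pval a + nexp (kd a) * pval b.
Proof.
elim: (pvalP a) b => {a} [a a0|i s a v s_lt _ IH] b.
  by rewrite a0 nexp0 mul1n (kd_eq0_kid (kr b) a0) kcomp_kidl.
rewrite -kcompA !pval_edge // IH kd_edge_kcomp // nexpD nexp_dunit.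
by rewrite mulnDr addnA mulnA.
Qed.

Lemma pval_inj a b : kd a = kd b -> pval a = pval b -> a = b.
Proof.
elim: (pvalP a) b => {a} [a a0|i s a v s_lt _ IH] b da.
  by move=> _; rewrite (kd_eq0_kid (kr b) a0); apply/esym/kd_eq0_kid; rewrite -da.
have /edge_factor [t [b' [t_lt b_eq db']]] : 0 < kd b i.
  by rewrite -da kd_edge_kcomp // !ffunE eqxx.
rewrite b_eq pval_edge // => digits_eq.
have [s_t v_b'] : s = t /\ v = pval b'.
  move: digits_eq; rewrite ![_ + n _ * _]addnC ![n _ * _]mulnC => /(congr1 (edivn^~ (n i))).
  by rewrite !edivn_eq // => -[-> ->].
rewrite s_t; congr kcomp; apply: IH => //.
by rewrite db' -da kd_edge_kcomp // daddKr.
Qed.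

Lemma path_exists m v : v < nexp m -> exists a, kd a = m /\ pval a = v.
Proof.
move: {2}(dsize m) (leqnn (dsize m)) => t.
elim: t m v => [|t IH] m v le_m.
  move: le_m; rewrite leqn0 => /eqP /dsize_eq0 -> {m}; rewrite nexp0 ltnS leqn0 => /eqP ->.
  have [[w _] _ _ _ _] := odo.
  by exists (kid w); rewrite kg_d_id; split=> //; apply/pval_eq/path_value0/kg_d_id.
have [->|/eqP/dvec_neq0 [i /dadd_dunit_dsub m_eq]] := eqVneq m dzero.
  by apply: IH; rewrite /dsize big1 // => i _; rewrite ffunE.
set m' := dsub m (dunit i) in m_eq; rewrite -m_eq nexpD nexp_dunit => v_lt.
have le_m' : dsize m' <= t by move: le_m; rewrite -m_eq dsizeD dsize_dunit.
have lt_m' : v %/ n i < nexp m' by rewrite ltn_divLR ?n_gt0 // mulnC.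
have [a' [da' va']] := IH m' (v %/ n i) le_m' lt_m'.
have v_lt_ni : v %% n i < n i by rewrite ltn_mod n_gt0.
exists (kcomp (e i (v %% n i)) a'); rewrite kd_edge_kcomp // da' pval_edge // va'.
by rewrite addnC mulnC -divn_eq.
Qed.

Definition path_of m v : kP L :=
  proj1_sig (constructive_indefinite_description _
    (path_exists (ltn_pmod v (nexp_gt0 m)))).

Lemma kd_path_of m v : kd (path_of m v) = m.
Proof. by rewrite /path_of; case: constructive_indefinite_description => ? []. Qed.

Lemma pval_path_of m v : pval (path_of m v) = v %% nexp m.
Proof. by rewrite /path_of; case: constructive_indefinite_description => ? []. Qed.

Lemma path_of_pval a : path_of (kd a) (pval a) = a.
Proof. by apply: pval_inj; rewrite ?kd_path_of // pval_path_of modn_small // pval_lt. Qed.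

Lemma path_of_mod m v w : v = w %[mod nexp m] -> path_of m v = path_of m w.
Proof. by move=> vw; apply: pval_inj; rewrite ?kd_path_of // !pval_path_of. Qed.

Implicit Types (x : dvec k -> dvec k -> kP L) (V : dvec k -> nat).

(* Infinite paths are n-adic integers, given by their coherent sequences of
   residues modulo n^q. *)
Definition coherent V := forall p q, dle p q -> V p = V q %% nexp p.

Lemma coherent_lt V q : coherent V -> V q < nexp q.
Proof. by move=> V_coh; rewrite (V_coh q q (dle_refl q)) ltn_mod nexp_gt0. Qed.

(* The segment [x(p, q)] carries the digits of [V q] at the places [p <= _ < q]. *)
Definition path_of_seq V p q : kP L := path_of (dsub q p) (V q %/ nexp p).

Lemma infpath_path_of_seq V : coherent V -> infpath (path_of_seq V).
Proof.
move=> V_coh; exists (fun p => kr (path_of_seq V p p)); split.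
- by move=> p; apply: kd_eq0_kid; rewrite kd_path_of dsubdd.
- by move=> p q _; split; rewrite ?kd_path_of //; apply: odometer_one_vertex.
move=> p q m le_pq le_qm; apply: pval_inj; first by rewrite kd_kcomp !kd_path_of dadd_dsub2.
rewrite pvalM !pval_path_of kd_path_of (V_coh q m le_qm) (nexp_dsub le_pq).
by rewrite divnMA [nexp p * _]mulnC -modn_divl modn_mod modn_mul_split -nexpD dadd_dsub2.
Qed.

Definition seq_of_path x q := pval (x dzero q).

Lemma seq_of_pathD x p q : infpath x -> dle p q ->
  seq_of_path x q = seq_of_path x p + nexp p * pval (x p q).
Proof.
move=> x_path le_pq; rewrite /seq_of_path -(infpath_kcomp x_path (dle0 p) le_pq) pvalM.
by rewrite (infpath_kd x_path (dle0 p)) dsub0.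
Qed.

Lemma seq_of_path_lt x p : infpath x -> seq_of_path x p < nexp p.
Proof.
move=> x_path; rewrite /seq_of_path -[p in nexp p]dsub0.
by rewrite -(infpath_kd x_path (dle0 p)) pval_lt.
Qed.

Lemma coherent_seq_of_path x : infpath x -> coherent (seq_of_path x).
Proof.
move=> x_path p q le_pq; rewrite (seq_of_pathD x_path le_pq) addnC mulnC modnMDl.
by rewrite modn_small // seq_of_path_lt.
Qed.

Lemma path_of_seq_of_path x p q : infpath x -> dle p q ->
  x p q = path_of_seq (seq_of_path x) p q.
Proof.
move=> x_path le_pq; rewrite /path_of_seq -{1}(path_of_pval (x p q)).
rewrite (infpath_kd x_path le_pq).
rewrite (seq_of_pathD x_path le_pq) addnC mulnC divnMDl ?nexp_gt0 //.
by rewrite divn_small ?addn0 ?seq_of_path_lt.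
Qed.

(* The residues of [mu x] are those of [pval mu + n^(d mu) * z], where [z] is the
   n-adic integer of [x]. *)
Definition prepend_seq u m V q := (u + nexp m * V (dsub q m)) %% nexp q.

Lemma prepend_seqE u m V q Q : coherent V -> dle (dsub q m) Q ->
  prepend_seq u m V q = (u + nexp m * V Q) %% nexp q.
Proof.
move=> V_coh le_Q; rewrite /prepend_seq (V_coh _ _ le_Q) muln_modr -nexpD.
have /modn_dvdm dvd_q := dvdn_nexp (dle_dadd_dsub m q).
by rewrite -[LHS]dvd_q modnDmr dvd_q.
Qed.

Lemma coherent_prepend_seq u m V : coherent V -> coherent (prepend_seq u m V).
Proof.
move=> V_coh p q le_pq.
rewrite (prepend_seqE u V_coh (dle_dsub2r m le_pq)) (prepend_seqE u V_coh (dle_refl _)).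
by rewrite modn_dvdm // dvdn_nexp.
Qed.

Lemma is_concat_prepend mu x : infpath x ->
  is_concat mu x (path_of_seq (prepend_seq (pval mu) (kd mu) (seq_of_path x))).
Proof.
move=> x_path; have V_coh := coherent_seq_of_path x_path; split.
- exact/infpath_path_of_seq/coherent_prepend_seq.
- rewrite /path_of_seq dsub0 nexp0 divn1 -[RHS](path_of_pval mu); apply: path_of_mod.
  by rewrite /prepend_seq modn_mod addnC mulnC modnMDl.
move=> p q le_pq; rewrite (path_of_seq_of_path x_path le_pq) /path_of_seq dsubDl.
congr path_of; rewrite /prepend_seq daddKr modn_small.
  rewrite nexpD divnMA addnC mulnC divnMDl ?nexp_gt0 //.
  by rewrite (divn_small (pval_lt mu)) addn0.
rewrite nexpD.
have := pval_lt mu; have := coherent_lt q V_coh.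
move: (pval mu) (seq_of_path x q) => u w; nia.
Qed.

Lemma Per_L_of_nexp_eq m p : nexp m = nexp p -> Per_L L (ddiff m p).
Proof.
move=> nexp_eq; exists (path_of m 0), (path_of p 0); split.
- exact: odometer_one_vertex.
- move=> x x_path _; set V := seq_of_path x.
  have V_coh : coherent V by apply: coherent_seq_of_path.
  have prepend_eq : prepend_seq 0 m V = prepend_seq 0 p V.
    apply: functional_extensionality => q.
    by rewrite !(prepend_seqE 0 V_coh (dle_dsubl _ q)) nexp_eq.
  have := is_concat_prepend (path_of m 0) x_path.
  have := is_concat_prepend (path_of p 0) x_path.
  rewrite !pval_path_of !kd_path_of !mod0n -/V prepend_eq.
  by exists (path_of_seq (prepend_seq 0 p V)).
- by rewrite !kd_path_of.
Qed.

Definition const_seq w q := w %% nexp q.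

Lemma coherent_const_seq w : coherent (const_seq w).
Proof. by move=> p q le_pq; rewrite /const_seq modn_dvdm // dvdn_nexp. Qed.

Lemma path_of_const_seq w q : path_of_seq (const_seq w) dzero q = path_of q w.
Proof. by rewrite /path_of_seq dsub0 nexp0 divn1; apply: path_of_mod; rewrite modn_mod. Qed.

Section Cycline.
Variables (G : zmodType) (A : selfsim G L) (mu nu : kP L) (g : G).
Hypothesis mu_g_nu : cycline A mu g nu.

Lemma cycline_pval x : infpath x ->
  pval mu + nexp (kd mu) * pval (act A g (x dzero (kd nu))) =
  pval nu + nexp (kd nu) * pval (x dzero (kd mu)).
Proof.
move=> x_path; have x00 := infpath_origin odometer_one_vertex (ks nu) x_path.
have [_ /(_ x x_path x00) [y [mu_gx nu_x]]] := mu_g_nu.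
have := is_concat_init nu_x (kd mu); rewrite daddC (is_concat_init mu_gx).
by rewrite /gact x00 ss_res_id => /(congr1 pval); rewrite !pvalM.
Qed.

Lemma cycline_pval_const w :
  pval mu + nexp (kd mu) * pval (act A g (path_of (kd nu) w)) =
  pval nu + nexp (kd nu) * (w %% nexp (kd mu)).
Proof.
have := cycline_pval (infpath_path_of_seq (coherent_const_seq w)).
by rewrite !path_of_const_seq pval_path_of.
Qed.

End Cycline.

Lemma nexp_eq_of_cycline (G : zmodType) (A : selfsim G L) mu g nu :
  cycline A mu g nu -> nexp (kd mu) = nexp (kd nu).
Proof.
move=> mu_g_nu; apply/eqP; rewrite eqn_dvd; apply/andP; split.
  exact: dvdn_digit_shift (nexp_gt0 _) (cycline_pval_const mu_g_nu).
pose back u := pval (act A (- g)%R (path_of (kd nu) u)).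
have act_back u : act A g (path_of (kd nu) (back u)) = path_of (kd nu) u.
  rewrite -{1}(kd_path_of (kd nu) u) -(ss_d A (- g)%R) path_of_pval.
  by rewrite -ss_actD subrr ss_act0.
apply: (@dvdn_digit_shift _ _ (pval nu) (pval mu) (fun u => back u %% nexp (kd mu)))
  (nexp_gt0 _) _ => u.
by rewrite -(cycline_pval_const mu_g_nu) act_back pval_path_of.
Qed.

Lemma npow_ddiff m p : npow n (ddiff m p) = ((nexp m)%:R / (nexp p)%:R)%R.
Proof.
rewrite /npow /nexp !natr_prod -prodf_div; apply: eq_bigr => i _.
by rewrite ffunE !natrX expfzDr ?pnatr_eq0 -?lt0n ?n_gt0 // -exprnN.
Qed.

Lemma Per_GL_npow1 (G : zmodType) (A : selfsim G L) (p : zvec k) :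
  Per_GL A p -> npow n p = 1%R.
Proof.
case=> mu [g [nu [mu_g_nu ->]]].
by rewrite npow_ddiff (nexp_eq_of_cycline mu_g_nu) divff // pnatr_eq0 -lt0n nexp_gt0.
Qed.

Definition dpos (p : zvec k) : dvec k := [ffun i => `|p i|%N * (0 <= p i)%R].
Definition dneg (p : zvec k) : dvec k := [ffun i => `|p i|%N * (p i < 0)%R].

Lemma ddiff_dpos_dneg (p : zvec k) : ddiff (dpos p) (dneg p) = p.
Proof. by apply/ffunP=> i; rewrite !ffunE; case: (p i) => m; lia. Qed.

Lemma npow1_Per_L (p : zvec k) : npow n p = 1%R -> Per_L L p.
Proof.
rewrite -(ddiff_dpos_dneg p) npow_ddiff => /divr1_eq /eqP.
by rewrite eqr_nat => /eqP; apply: Per_L_of_nexp_eq.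
Qed.

End Odometer.

Theorem theorem7p5 (k : nat) (hk : (0 < k)%N) (n : 'I_k -> nat)
    (hn : forall i, (1 < n i)%N)
    (L : kgraph k) (x : 'I_k -> nat -> kP L) (A : selfsim int L) :
  odometer_kgraph n x -> odometer_action n x A ->
  forall p : zvec k,
    (Per_GL A p <-> Per_L L p) /\ (Per_L L p <-> npow n p = 1%R).
Proof.
move=> odo _ p.
have L_GL : Per_L L p -> Per_GL A p := @Per_L_Per_GL _ _ _ A p.
have GL_1 : Per_GL A p -> npow n p = 1%R := Per_GL_npow1 hn odo (p := p).
have one_L : npow n p = 1%R -> Per_L L p := npow1_Per_L hn odo (p := p).
by split; split; auto.
Qed.
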